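(* Let $|\psi\rangle$ be a pure three-qubit state and let $\{i,j,k\}=\{A,B,C\}$. Then $S_{ij}>1$ (i.e. $\rho_{ij}$ violates the three-settings CJWR linear steering inequality) if and only if $\mathcal C_{ij}^2>\frac{\mathcal C_{ik}^2+\mathcal C_{jk}^2}{2}$.
   Context: For a two-qubit state $\rho$ let $t_{kl}=\mathrm{Tr}[\rho\,\sigma_k\otimes\sigma_l]$ ($\sigma_k$ Pauli matrices) and $S(\rho)=\sum_{k,l=1}^3 t_{kl}^2$; $\rho_{ij}$ is the reduced state of qubits $i,j$ of $|\psi\rangle$ and $S_{ij}=S(\rho_{ij})$. $\mathcal C_{ij}$ is the Wootters concurrence of $\rho_{ij}$: $\mathcal C(\rho)=\max\{0,\lambda_1-\lambda_2-\lambda_3-\lambda_4\}$, with $\lambda_1\ge\dots\ge\lambda_4$ the square roots of the eigenvalues of $\rho(\sigma_2\otimes\sigma_2)\rho^*(\sigma_2\otimes\sigma_2)$. The three-settings CJWR inequality $\frac1{\sqrt3}|\sum_{k=1}^3\langle A_k\otimes B_k\rangle|\le1$ (unit $\hat a_k$, orthonormal $\hat b_k$) has maximum $\sqrt{S(\rho)}$ over settings, so it is violated iff $S(\rho)>1$. *)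

(* Complex numbers are modelled as R[i] for a real closed
   field R (e.g. the reals); all definitions are stated for an arbitrary
   numClosedFieldType C. *)
From HB Require Import structures.
From mathcomp Require Import all_boot all_order all_algebra.
Set Implicit Arguments. Unset Strict Implicit. Unset Printing Implicit Defensive.
Import Order.TTheory GRing.Theory Num.Theory.
Local Open Scope ring_scope.

Section Defs.
Variable C : numClosedFieldType.

Definition pauli (k : 'I_3) : 'M[C]_2 :=
  \matrix_(r < 2, s < 2)
    match val k with
    | 0%N => if r != s then 1 else 0
    | 1%N => if r == s then 0 else if (val r == 0%N) then - 'i else 'i
    | _ => if r == s then (if val r == 0%N then 1 else -1) else 0
    end.

(* Kronecker product of 2x2 matrices; basis index of |a b> is 2a+b. *)
Definition kron2 (A B : 'M[C]_2) : 'M[C]_4 :=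
  \matrix_(r < 4, s < 4)
    (A (inord (r %/ 2)%N) (inord (s %/ 2)%N) * B (inord (r %% 2)%N) (inord (s %% 2)%N)).

(* A three-qubit pure state: a unit vector of C^8.  The computational basis
   state |b0 b1 b2> (qubit A = 0, B = 1, C = 2) has index 4 b0 + 2 b1 + b2. *)
Definition normalized (psi : 'cV[C]_8) := \sum_(i < 8) `|psi i 0| ^+ 2 = 1.

Definition basis_idx (f : {ffun 'I_3 -> 'I_2}) : 'I_8 :=
  inord (\sum_(q < 3) f q * 2 ^ (2 - q))%N.

Definition amp (psi : 'cV[C]_8) (f : {ffun 'I_3 -> 'I_2}) : C :=
  psi (basis_idx f) 0.

(* Reduced density matrix rho_ij = Tr_k |psi><psi| of qubits i, j (i first),
   obtained by tracing out the remaining qubit. *)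
Definition reduced (psi : 'cV[C]_8) (i j : 'I_3) : 'M[C]_4 :=
  \matrix_(r < 4, s < 4)
    \sum_(f : {ffun 'I_3 -> 'I_2} |
            (val (f i) == (r %/ 2)%N) && (val (f j) == (r %% 2)%N))
    \sum_(g : {ffun 'I_3 -> 'I_2} |
            [&& val (g i) == (s %/ 2)%N, val (g j) == (s %% 2)%N &
             [forall q, (q != i) && (q != j) ==> (f q == g q)]])
      amp psi f * (amp psi g)^*.

Definition tcorr (rho : 'M[C]_4) (k l : 'I_3) : C :=
  \tr (rho *m kron2 (pauli k) (pauli l)).

Definition Sval (rho : 'M[C]_4) : C := \sum_(k < 3) \sum_(l < 3) tcorr rho k l ^+ 2.

Definition spinflip (rho : 'M[C]_4) : 'M[C]_4 :=
  let Y := kron2 (pauli 1) (pauli 1) in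
  rho *m Y *m map_mx (@Num.conj_op C) rho *m Y.

Definition eigenvalues (M : 'M[C]_4) : seq C :=
  sval (closed_field_poly_normal (char_poly M)).

Definition lambdas (rho : 'M[C]_4) : seq C :=
  sort (fun x y => y <= x) (map sqrtC (eigenvalues (spinflip rho))).

Definition concurrence (rho : 'M[C]_4) : C :=
  let l := lambdas rho in Num.max 0 (l`_0 - l`_1 - l`_2 - l`_3).

End Defs.

(* Arrange the amplitudes of psi in a 4x2 matrix P, rows indexed by the values
   of qubits i, j and columns by the value of qubit k, so that rho_ij = P P^+.
   With Y = sigma_y (x) sigma_y, the spin-flipped matrix rho_ij Y rho_ij^* Y
   factors as P B where B P = M^* M for the symmetric 2x2 matrix M = P^T Y P;
   since AB and BA have the same nonzero spectrum, the lambdas are the square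
   roots of the eigenvalues of M^* M, and the characteristic polynomial
   X^2 - |M|_F^2 X + |det M|^2 of the latter gives C_ij^2 = |M|_F^2 - 2 |det M|.
   Now det M is the hyperdeterminant of the amplitude tensor, the same for every
   choice of the singled-out qubit, while expanding t_kl in the amplitudes gives
   S_ij = 1 + 2 |M_ij|_F^2 - |M_ik|_F^2 - |M_jk|_F^2.  Hence
   S_ij - 1 = 2 C_ij^2 - C_ik^2 - C_jk^2. *)

From HB Require Import structures.
From mathcomp Require Import all_boot all_order all_algebra.
From mathcomp Require Import complex zify ring.
Set Implicit Arguments. Unset Strict Implicit. Unset Printing Implicit Defensive.
Import Order.TTheory GRing.Theory Num.Theory Num.Def.
Local Open Scope ring_scope.
Local Open Scope sesquilinear_scope.

Local Notation i0 := (@Ordinal 2 0 isT).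
Local Notation i1 := (@Ordinal 2 1 isT).

Lemma big_ord2E (V : nmodType) (F : 'I_2 -> V) : \sum_(i < 2) F i = F i0 + F i1.
Proof. by rewrite !big_ord_recl big_ord0 addr0; congr (F _ + F _); apply: val_inj. Qed.

Lemma big_ord3E (V : nmodType) (F : 'I_3 -> V) :
  \sum_(i < 3) F i = F (Ordinal (isT : 0 < 3)%N) + F (Ordinal (isT : 1 < 3)%N)
                     + F (Ordinal (isT : 2 < 3)%N).
Proof.
by rewrite !big_ord_recl big_ord0 addr0 !addrA; congr (F _ + F _ + F _); apply: val_inj.
Qed.

Lemma big_ord4E (V : nmodType) (F : 'I_4 -> V) :
  \sum_(i < 4) F i = F (Ordinal (isT : 0 < 4)%N) + F (Ordinal (isT : 1 < 4)%N)
                     + F (Ordinal (isT : 2 < 4)%N) + F (Ordinal (isT : 3 < 4)%N).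
Proof.
by rewrite !big_ord_recl big_ord0 addr0 !addrA; congr (F _ + F _ + F _ + F _); apply: val_inj.
Qed.

Lemma char_poly_mulmxC (R : comNzRingType) m n (A : 'M[R]_(m, n)) (B : 'M[R]_(n, m)) :
  'X^n * char_poly (A *m B) = 'X^m * char_poly (B *m A).
Proof.
pose x : {poly R} := 'X; pose A' := A ^ polyC; pose B' := B ^ polyC.
have eAB : char_poly_mx (A *m B) = x%:M - A' *m B' by rewrite /char_poly_mx map_mxM.
have eBA : char_poly_mx (B *m A) = x%:M - B' *m A' by rewrite /char_poly_mx map_mxM.
pose Q := block_mx (x%:M : 'M_m) A' B' (1%:M : 'M_n).
have lowerQ : block_mx 1%:M A' 0 1%:M *m block_mx (x%:M - A' *m B') 0 B' 1%:M = Q.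
  by rewrite mulmx_block !mul1mx !mulmx0 !mul0mx !mulmx1 !add0r ?addr0 subrK.
have upperQ : Q *m block_mx 1%:M (- A') 0 x%:M = block_mx x%:M 0 B' (x%:M - B' *m A').
  rewrite mulmx_block !mulmx1 !mulmx0 !addr0 mul_scalar_mx mul_mx_scalar.
  by rewrite mul_scalar_mx scalerN addNr mulmxN scale1r addrC.
have := congr1 determinant upperQ; rewrite det_mulmx det_ublock det_lblock -lowerQ.
rewrite det_mulmx det_ublock det_lblock !det1 !det_scalar !mul1r mulr1.
by rewrite /char_poly eAB eBA mulrC => ->.
Qed.

Lemma det_mx22 (R : comNzRingType) (M : 'M[R]_2) :
  \det M = M i0 i0 * M i1 i1 - M i0 i1 * M i1 i0.
Proof.
rewrite (expand_det_row _ i0) big_ord2E /cofactor !det_mx11 !mxE /=.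
have -> : lift i0 (0 : 'I_1) = i1 by apply/val_inj.
have -> : lift i1 (0 : 'I_1) = i0 by apply/val_inj.
rewrite expr0 expr1; ring.
Qed.

Lemma char_poly_mx22 (R : comNzRingType) (M : 'M[R]_2) :
  char_poly M = 'X^2 - (\tr M)%:P * 'X + (\det M)%:P.
Proof.
rewrite /char_poly /char_poly_mx [LHS]det_mx22 !mxE /mxtrace big_ord2E det_mx22 /=.
rewrite !mulr1n !mulr0n !polyCD !polyCM; ring.
Qed.

Lemma ltn_ord4_div2 (r : 'I_4) : (r %/ 2 < 2)%N.
Proof. by case: r => [[|[|[|[|?]]]] ?]. Qed.

Lemma ltn_ord4_mod2 (r : 'I_4) : (r %% 2 < 2)%N.
Proof. by rewrite ltn_mod. Qed.

Section Pauli.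
Variable C : numClosedFieldType.

(* Splitting off the phase 'i of sigma_y leaves real entries, so that [ring] can
   expand t_kl^2 without knowing 'i^2 = -1. *)
Definition pauli_phase (k : nat) : C := if k == 1%N then 'i else 1.

Definition pauli_sign (k a b : nat) : C :=
  match k with
  | 0%N => if a != b then 1 else 0
  | 1%N => if a == b then 0 else if a == 0%N then -1 else 1
  | _ => if a == b then (if a == 0%N then 1 else -1) else 0
  end.

Lemma pauliE (k : 'I_3) a b : (a < 2)%N -> (b < 2)%N ->
  pauli C k (inord a) (inord b) = pauli_phase k * pauli_sign k a b.
Proof.
move=> a2 b2; rewrite mxE /= !inordK //.
have -> : (inord a == inord b :> 'I_2) = (a == b) by rewrite -val_eqE /= !inordK.
case: k => [[|[|[|?]]] ?] //=; rewrite /pauli_phase /pauli_sign /= ?mul1r //.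
by case: (a == b); case: (a == 0%N); rewrite ?mulr0 ?mulrN1 ?mulr1.
Qed.

Lemma kron2_pauliE (k l : 'I_3) (r s : 'I_4) :
  kron2 (pauli C k) (pauli C l) r s =
  pauli_phase k * pauli_phase l *
  (pauli_sign k (r %/ 2) (s %/ 2) * pauli_sign l (r %% 2) (s %% 2)).
Proof. by rewrite mxE !pauliE ?ltn_ord4_div2 ?ltn_ord4_mod2 //; ring. Qed.

Lemma conj_pauli_sign k a b : (pauli_sign k a b)^* = pauli_sign k a b.
Proof.
by rewrite /pauli_sign; case: k => [|[|k]]; repeat case: (_ == _);
  rewrite /= ?rmorphN ?rmorph1 ?rmorph0.
Qed.

Lemma pauli_sign1C a b : (a < 2)%N -> (b < 2)%N -> pauli_sign 1 b a = - pauli_sign 1 a b.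
Proof. by case: a => [|[|?]] //; case: b => [|[|?]] //= _ _; rewrite ?oppr0 ?opprK. Qed.

Definition sigma_yy : 'M[C]_4 := kron2 (pauli C 1) (pauli C 1).

Lemma sigma_yyE (r s : 'I_4) :
  sigma_yy r s = - (pauli_sign 1 (r %/ 2) (s %/ 2) * pauli_sign 1 (r %% 2) (s %% 2)).
Proof. by rewrite /sigma_yy kron2_pauliE /pauli_phase /= -expr2 sqrCi; ring. Qed.

Lemma trmx_sigma_yy : sigma_yy^T = sigma_yy.
Proof.
apply/matrixP => r s; rewrite mxE !sigma_yyE.
rewrite (pauli_sign1C (ltn_ord4_div2 r) (ltn_ord4_div2 s)).
by rewrite (pauli_sign1C (ltn_ord4_mod2 r) (ltn_ord4_mod2 s)); ring.
Qed.

Lemma map_sigma_yy_conj : sigma_yy ^ conjC = sigma_yy.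
Proof.
apply/matrixP => r s; rewrite mxE !sigma_yyE rmorphN rmorphM.
by congr (- (_ * _)); apply: conj_pauli_sign.
Qed.

End Pauli.

Lemma ord3_other (p q t n : 'I_3) :
  p != q -> p != t -> q != t -> n != p -> n != q -> n = t.
Proof. by move: p q t n; do 4 case=> [[|[|[|?]]] ?] //=; move=> *; apply: val_inj. Qed.

Lemma basis_idx_val f :
  val (basis_idx f) = (4 * f (inord 0) + 2 * f (inord 1) + f (inord 2))%N.
Proof.
rewrite /basis_idx !big_ord_recl big_ord0 /= /bump /=.
rewrite (_ : 2 ^ (2 - 0) = 4)%N // (_ : 2 ^ (2 - (1 + 0)) = 2)%N //.
rewrite (_ : 2 ^ (2 - (1 + (1 + 0))) = 1)%N //.
have -> : lift ord0 (lift ord0 ord0) = inord 2 :> 'I_3 by apply/val_inj; rewrite /= inordK.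
have -> : lift ord0 ord0 = inord 1 :> 'I_3 by apply/val_inj; rewrite /= inordK.
have -> : ord0 = inord 0 :> 'I_3 by apply/val_inj; rewrite /= inordK.
have := ltn_ord (f (inord 0)); have := ltn_ord (f (inord 1)); have := ltn_ord (f (inord 2)).
by move=> *; rewrite inordK; lia.
Qed.

Lemma basis_idx_inj : injective basis_idx.
Proof.
move=> f g /(congr1 val); rewrite !basis_idx_val => fg.
have := ltn_ord (f (inord 0)); have := ltn_ord (f (inord 1)); have := ltn_ord (f (inord 2)).
have := ltn_ord (g (inord 0)); have := ltn_ord (g (inord 1)); have := ltn_ord (g (inord 2)).
move=> *; apply/ffunP => n; apply: val_inj.
by case: n => [[|[|[|?]]] ?] //; rewrite -[Ordinal _]inord_val /=; lia.
Qed.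

Lemma basis_idx_bij : bijective basis_idx.
Proof. by apply: (inj_card_bij basis_idx_inj); rewrite card_ffun !card_ord. Qed.

Definition config (p q t : 'I_3) (x y w : 'I_2) : {ffun 'I_3 -> 'I_2} :=
  [ffun n => if n == p then x else if n == q then y else w].

Section Configurations.
Variables p q t : 'I_3.
Hypotheses (pq : p != q) (pt : p != t) (qt : q != t).

Let qp : (q == p) = false. Proof. by rewrite eq_sym (negbTE pq). Qed.
Let tp : (t == p) = false. Proof. by rewrite eq_sym (negbTE pt). Qed.
Let tq : (t == q) = false. Proof. by rewrite eq_sym (negbTE qt). Qed.

Lemma config_eq f x y w :
  (f == config p q t x y w) = [&& f p == x, f q == y & f t == w].
Proof.
apply/eqP/and3P => [->|[/eqP fp /eqP fq /eqP ft]]; first by rewrite !ffunE qp tp tq !eqxx.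
apply/ffunP => n; rewrite ffunE.
have [->//|np] := eqVneq n p; have [->//|nq] := eqVneq n q.
by rewrite (ord3_other pq pt qt np nq).
Qed.

Lemma configC x y w : config p q t x y w = config p t q x w y.
Proof.
apply/ffunP => n; rewrite !ffunE.
have [//|np] := eqVneq n p; have [->|nq] := eqVneq n q; first by rewrite (negbTE qt).
by rewrite (ord3_other pq pt qt np nq) eqxx.
Qed.

Lemma config_rot x y w : config p q t x y w = config q t p y w x.
Proof.
apply/ffunP => n; rewrite !ffunE.
have [->|np] := eqVneq n p; first by rewrite (negbTE pq) (negbTE pt).
have [//|nq] := eqVneq n q.
by rewrite (ord3_other pq pt qt np nq) ?tp ?tq eqxx.
Qed.

Lemma sum_config (V : nmodType) (F : {ffun 'I_3 -> 'I_2} -> V) :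
  \sum_f F f = \sum_(x < 2) \sum_(y < 2) \sum_(w < 2) F (config p q t x y w).
Proof.
rewrite (partition_big (fun f : {ffun _ -> _} => f p) predT) //=; apply: eq_bigr => x _.
rewrite (partition_big (fun f : {ffun _ -> _} => f q) predT) //=; apply: eq_bigr => y _.
rewrite (partition_big (fun f : {ffun _ -> _} => f t) predT) //=; apply: eq_bigr => w _.
by rewrite (big_pred1 (config p q t x y w)) // => f /=; rewrite config_eq // andbA.
Qed.

End Configurations.

Section Tensor.
Variable C : numClosedFieldType.

(* Tensors are indexed by [nat] rather than ['I_2] so that the entries of
   [tensor_mx G] at concrete indices reduce by [simpl]. *)
Definition tensor_mx (G : nat -> nat -> nat -> C) : 'M[C]_(4, 2) :=
  \matrix_(r < 4, w < 2) G r./2 (odd r) w.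

Definition amp_tensor (psi : 'cV[C]_8) (p q t : 'I_3) (x y w : nat) : C :=
  amp psi (config p q t (inord x) (inord y) (inord w)).

Lemma reduced_gram psi p q t : p != q -> p != t -> q != t ->
  reduced psi p q = tensor_mx (amp_tensor psi p q t) *m (tensor_mx (amp_tensor psi p q t))^t*.
Proof.
move=> pq pt qt; apply/matrixP => r s; rewrite !mxE.
have [tp tq] : (t == p) = false /\ (t == q) = false by split; rewrite eq_sym; apply: negbTE.
pose hi (r : 'I_4) : 'I_2 := inord r./2; pose lo (r : 'I_4) : 'I_2 := inord (odd r).
have hiE (r' : 'I_4) : val (hi r') = (r' %/ 2)%N.
  by rewrite /hi /=; have := ltn_ord4_div2 r'; rewrite divn2 => /inordK ->.
have loE (r' : 'I_4) : val (lo r') = (r' %% 2)%N.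
  by rewrite /lo /=; have := ltn_ord4_mod2 r'; rewrite modn2 => /inordK ->.
transitivity (\sum_(f : {ffun 'I_3 -> 'I_2} | (val (f p) == r %/ 2)%N && (val (f q) == r %% 2)%N)
   amp psi f * (amp psi (config p q t (hi s) (lo s) (f t)))^*).
  apply: eq_bigr => f _; rewrite (big_pred1 (config p q t (hi s) (lo s) (f t))) // => g /=.
  rewrite config_eq // -hiE -loE !val_eqE.
  apply/and3P/and3P => [[-> -> /forallP /(_ t)]|[/eqP -> /eqP -> /eqP gt]].
    by rewrite tp tq /= eq_sym.
  split=> //; apply/forallP => n; apply/implyP => /andP[np nq].
  by rewrite (ord3_other pq pt qt np nq) gt.
rewrite (partition_big (fun f : {ffun 'I_3 -> 'I_2} => f t) predT) //=.
apply: eq_bigr => w _; rewrite (big_pred1 (config p q t (hi r) (lo r) w)).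
  by rewrite !mxE ffunE tp tq /amp_tensor inord_val.
by move=> f /=; rewrite config_eq // -hiE -loE !val_eqE andbA.
Qed.

End Tensor.

Section Concurrence.
Variable C : numClosedFieldType.

Definition spin_form (P : 'M[C]_(4, 2)) : 'M[C]_2 := P^T *m sigma_yy C *m P.

Definition frobenius2 m n (M : 'M[C]_(m, n)) : C :=
  \sum_(a < m) \sum_(b < n) `|M a b| ^+ 2.

Lemma trmx_spin_form P : (spin_form P)^T = spin_form P.
Proof. by rewrite /spin_form !trmx_mul trmxK trmx_sigma_yy mulmxA. Qed.

Lemma char_poly_spinflip_gram P :
  char_poly (spinflip (P *m P^t*)) = 'X^2 * char_poly (map_mx conjC (spin_form P) *m spin_form P).
Proof.
pose B := P^t* *m sigma_yy C *m map_mx conjC P *m P^T *m sigma_yy C.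
have -> : spinflip (P *m P^t*) = P *m B.
  rewrite /spinflip -/(sigma_yy C) map_mxM /B !mulmxA.
  by congr (_ *m _ *m _); apply: map_mxCK.
have -> : map_mx conjC (spin_form P) *m spin_form P = B *m P.
  by rewrite /spin_form !map_mxM map_sigma_yy_conj /B !mulmxA.
have X2_neq0 : ('X^2 : {poly C}) != 0 by rewrite expf_neq0 // polyX_eq0.
by apply: (mulfI X2_neq0); rewrite char_poly_mulmxC mulrA -exprD.
Qed.

Lemma char_poly_conj_mul_sym (M : 'M[C]_2) : M^T = M ->
  char_poly (map_mx conjC M *m M) = 'X^2 - (frobenius2 M)%:P * 'X + (`|\det M| ^+ 2)%:P.
Proof.
move=> symM; rewrite char_poly_mx22 det_mulmx det_map_mx normCKC; congr (_ - _ * _ + _).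
congr _%:P; rewrite /mxtrace /frobenius2; apply: eq_bigr => a _; rewrite mxE.
apply: eq_bigr => b _; rewrite normCKC mxE; congr (_ * _).
by rewrite -[in LHS]symM mxE.
Qed.

Lemma frobenius2_ge_det (M : 'M[C]_2) : 2 * `|\det M| <= frobenius2 M.
Proof.
have amgm (x y : C) : 0 <= x -> 0 <= y -> 2 * (x * y) <= x ^+ 2 + y ^+ 2.
  move=> x0 y0; rewrite -subr_ge0 (_ : _ - _ = (x - y) ^+ 2); last by ring.
  by rewrite real_exprn_even_ge0 // rpredB // ger0_real.
rewrite det_mx22 /frobenius2 !big_ord2E.
apply: le_trans (_ : 2 * (`|M i0 i0| * `|M i1 i1|) + 2 * (`|M i0 i1| * `|M i1 i0|) <= _).
  by rewrite -mulrDr ler_pM2l // -!normrM ler_normB.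
apply: le_trans (lerD (amgm _ _ _ _) (amgm _ _ _ _)) _; rewrite ?normr_ge0 //.
by rewrite [leLHS]addrACA (addrC (`|M i1 i1| ^+ 2)) lexx.
Qed.

End Concurrence.

Section Spectrum.
Variable C : numClosedFieldType.

Lemma eigenvalues_perm_eq (M : 'M[C]_4) s :
  char_poly M = \prod_(z <- s) ('X - z%:P) -> perm_eq (eigenvalues M) s.
Proof.
rewrite /eigenvalues; case: closed_field_poly_normal => s' /= charM charMs.
by apply: prod_XsubC_eq; rewrite -charMs charM (monicP (char_poly_monic _)) scale1r.
Qed.

Lemma lambdas_eq (rho : 'M[C]_4) (l1 l2 : C) : 0 <= l2 <= l1 ->
  char_poly (spinflip rho) = 'X^2 * (('X - (l1 ^+ 2)%:P) * ('X - (l2 ^+ 2)%:P)) ->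
  lambdas rho = [:: l1; l2; 0; 0].
Proof.
move=> /andP[l2_ge0 l21] charM; have l1_ge0 := le_trans l2_ge0 l21.
have eig : perm_eq (eigenvalues (spinflip rho)) [:: 0; 0; l1 ^+ 2; l2 ^+ 2].
  by apply: eigenvalues_perm_eq; rewrite charM !big_cons big_nil polyC0 subr0; ring.
have eig_perm : perm_eq (map sqrtC (eigenvalues (spinflip rho))) [:: l1; l2; 0; 0].
  apply: perm_trans (perm_map sqrtC eig) _; rewrite /= sqrtC0 !sqrCK //.
  by rewrite (perm_catC [:: 0; 0] [:: l1; l2]).
have nneg x : x \in [:: l1; l2; 0; 0] -> 0 <= x by rewrite !inE => /or4P[] /eqP ->.
have geq_trans : transitive (fun x y : C => y <= x).
  by move=> y x z yx zy; apply: le_trans zy yx.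
rewrite /lambdas; transitivity (sort (fun x y : C => y <= x) [:: l1; l2; 0; 0]).
  apply/esym/perm_sort_inP; rewrite 1?perm_sym //.
  - move=> x y /nneg x_ge0 /nneg y_ge0; exact: real_leVge (ger0_real y_ge0) (ger0_real x_ge0).
  - by move=> y x z _ _ _; apply: geq_trans.
  - by move=> x y _ _ /andP[yx xy]; apply: le_anti; rewrite xy yx.
by rewrite sorted_sort //= l21 l2_ge0 lexx.
Qed.

Lemma concurrence_eq (rho : 'M[C]_4) (l1 l2 : C) : 0 <= l2 <= l1 ->
  char_poly (spinflip rho) = 'X^2 * (('X - (l1 ^+ 2)%:P) * ('X - (l2 ^+ 2)%:P)) ->
  concurrence rho = l1 - l2.
Proof.
move=> l21 charM; rewrite /concurrence (lambdas_eq l21 charM) /= !subr0 max_r //.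
by case/andP: l21; rewrite subr_ge0.
Qed.

Lemma sqr_roots_quadratic (F D : C) : 0 <= D -> 2 * D <= F ->
  exists l1 l2 : C, [/\ 0 <= l2 <= l1,
    'X^2 - F%:P * 'X + (D ^+ 2)%:P = ('X - (l1 ^+ 2)%:P) * ('X - (l2 ^+ 2)%:P)
    & (l1 - l2) ^+ 2 = F - 2 * D].
Proof.
move=> D_ge0 DF; have D2_ge0 : 0 <= 2 * D by rewrite mulr_ge0.
have Fm_ge0 : 0 <= F - 2 * D by rewrite subr_ge0.
have Fp_ge0 : 0 <= F + 2 * D by rewrite addr_ge0 // (le_trans D2_ge0).
set u := sqrtC (F + 2 * D); set v := sqrtC (F - 2 * D).
have u2 : u ^+ 2 = F + 2 * D by rewrite sqrtCK.
have v2 : v ^+ 2 = F - 2 * D by rewrite sqrtCK.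
have v_ge0 : 0 <= v by rewrite sqrtC_ge0.
have vu : v <= u by rewrite ler_sqrtC ?nnegrE // lerD2l (le_trans _ D2_ge0) // oppr_le0.
pose l1 := (u + v) / 2; pose l2 := (u - v) / 2.
have sqr_sum : l1 ^+ 2 + l2 ^+ 2 = F.
  transitivity ((u ^+ 2 + v ^+ 2) / 2); first by rewrite /l1 /l2; field.
  by rewrite u2 v2; field.
have prod : l1 * l2 = D.
  transitivity ((u ^+ 2 - v ^+ 2) / 4); first by rewrite /l1 /l2; field.
  by rewrite u2 v2; field.
exists l1, l2; split.
- rewrite divr_ge0 ?subr_ge0 // ler_pM2r ?invr_gt0 // lerD2l.
  by rewrite (le_trans _ v_ge0) // oppr_le0.
- by rewrite -sqr_sum -prod polyCD [(l1 * l2) ^+ 2]exprMn [(_ * _)%:P]polyCM; ring.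
- by rewrite -v2; congr (_ ^+ 2); rewrite /l1 /l2; field.
Qed.

Lemma concurrence_gram (P : 'M[C]_(4, 2)) :
  concurrence (P *m P^t*) ^+ 2 = frobenius2 (spin_form P) - 2 * `|\det (spin_form P)|.
Proof.
have [l1 [l2 [l21 charM <-]]] :=
  sqr_roots_quadratic (normr_ge0 (\det (spin_form P))) (frobenius2_ge_det (spin_form P)).
congr (_ ^+ 2); apply: concurrence_eq l21 _.
by rewrite char_poly_spinflip_gram char_poly_conj_mul_sym ?trmx_spin_form // charM.
Qed.

End Spectrum.

Section Correlations.
Variable C : numClosedFieldType.
Implicit Types G : nat -> nat -> nat -> C.

Lemma spin_form_tensorE G a b :
  spin_form (tensor_mx G) a b =
  G 0 1 a * G 1 0 b + G 1 0 a * G 0 1 b - G 0 0 a * G 1 1 b - G 1 1 a * G 0 0 b.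
Proof.
rewrite /spin_form !mxE big_ord4E !mxE !big_ord4E !sigma_yyE !mxE !divn2 !modn2 /=.
ring.
Qed.

Lemma det_spin_form_swap G :
  \det (spin_form (tensor_mx (fun x y z => G x z y))) = \det (spin_form (tensor_mx G)).
Proof. by rewrite !det_mx22 !spin_form_tensorE; ring. Qed.

Lemma det_spin_form_rot G :
  \det (spin_form (tensor_mx (fun x y z => G z x y))) = \det (spin_form (tensor_mx G)).
Proof. by rewrite !det_mx22 !spin_form_tensorE; ring. Qed.

Definition tensor_norm2 G : C :=
  \sum_(x < 2) \sum_(y < 2) \sum_(z < 2) G x y z * (G x y z)^*.

Lemma frobenius2_spin_form_tensor G : frobenius2 (spin_form (tensor_mx G)) =
  \sum_(a < 2) \sum_(b < 2) spin_form (tensor_mx G) a b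
                          * spin_form (tensor_mx (fun x y z => (G x y z)^*)) a b.
Proof.
apply: eq_bigr => a _; apply: eq_bigr => b _.
by rewrite normCK !spin_form_tensorE !(rmorphB, rmorphD, rmorphM).
Qed.

Lemma sqr_pauli_phaseM k l : (pauli_phase C k * pauli_phase C l) ^+ 2 =
  if (k == 1%N) (+) (l == 1%N) then -1 else 1.
Proof.
rewrite /pauli_phase; case: (k == 1%N); case: (l == 1%N);
  by rewrite /= ?mul1r ?mulr1 ?expr1n ?sqrCi // exprMn sqrCi mulrNN mulr1.
Qed.

Lemma SvalE (rho : 'M[C]_4) : Sval rho =
  \sum_(k < 3) \sum_(l < 3) (if (k == 1%N :> nat) (+) (l == 1%N :> nat) then -1 else 1) *
    (\sum_(r < 4) \sum_(s < 4)
       rho r s * (pauli_sign C k (s %/ 2) (r %/ 2) * pauli_sign C l (s %% 2) (r %% 2))) ^+ 2.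
Proof.
apply: eq_bigr => k _; apply: eq_bigr => l _.
rewrite -sqr_pauli_phaseM -exprMn /tcorr /mxtrace mulr_sumr; congr (_ ^+ 2).
apply: eq_bigr => r _; rewrite mxE mulr_sumr; apply: eq_bigr => s _.
by rewrite kron2_pauliE; ring.
Qed.

Lemma Sval_gram G : Sval (tensor_mx G *m (tensor_mx G)^t*) =
  tensor_norm2 G ^+ 2 + 2 * frobenius2 (spin_form (tensor_mx G))
  - frobenius2 (spin_form (tensor_mx (fun x y z => G x z y)))
  - frobenius2 (spin_form (tensor_mx (fun x y z => G z x y))).
Proof.
have gramE (r s : 'I_4) : (tensor_mx G *m (tensor_mx G)^t*) r s =
    G r./2 (odd r) 0 * (G s./2 (odd s) 0)^* + G r./2 (odd r) 1 * (G s./2 (odd s) 1)^*.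
  by rewrite mxE big_ord2E !mxE.
rewrite SvalE !big_ord3E !big_ord4E !gramE !divn2 !modn2 /=.
rewrite !frobenius2_spin_form_tensor !big_ord2E !spin_form_tensorE /tensor_norm2 !big_ord2E /=.
ring.
Qed.

End Correlations.

Section AmplitudeTensor.
Variable C : numClosedFieldType.
Variables (psi : 'cV[C]_8) (i j k : 'I_3).
Hypotheses (ij : i != j) (ik : i != k) (jk : j != k).

Lemma tensor_norm2_amp_tensor : normalized psi -> tensor_norm2 (amp_tensor psi i j k) = 1.
Proof.
rewrite /normalized => <-; rewrite (reindex basis_idx); last exact: onW_bij basis_idx_bij.
rewrite (sum_config ij ik jk); apply: eq_bigr => x _; apply: eq_bigr => y _.
by apply: eq_bigr => z _; rewrite normCK /amp_tensor !inord_val.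
Qed.

Lemma tensor_mx_amp_tensorC :
  tensor_mx (amp_tensor psi i k j) = tensor_mx (fun x y z => amp_tensor psi i j k x z y).
Proof. by apply/matrixP => r w; rewrite !mxE /amp_tensor configC // eq_sym. Qed.

Lemma tensor_mx_amp_tensor_rot :
  tensor_mx (amp_tensor psi j k i) = tensor_mx (fun x y z => amp_tensor psi i j k z x y).
Proof. by apply/matrixP => r w; rewrite !mxE /amp_tensor (config_rot ij ik jk). Qed.

End AmplitudeTensor.

Lemma sqr_concurrence_gap (R : numFieldType) (D F_ij F_ik F_jk S c_ij c_ik c_jk : R) :
  S = 1 + 2 * F_ij - F_ik - F_jk ->
  c_ij ^+ 2 = F_ij - 2 * D -> c_ik ^+ 2 = F_ik - 2 * D -> c_jk ^+ 2 = F_jk - 2 * D ->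
  (1 < S <-> (c_ik ^+ 2 + c_jk ^+ 2) / 2 < c_ij ^+ 2).
Proof.
move=> -> -> -> ->.
rewrite (_ : 1 + _ - _ - _ = 1 + (2 * F_ij - F_ik - F_jk)); last by ring.
rewrite ltrDl ltr_pdivrMr // -[_ < _ * 2]subr_gt0.
by rewrite (_ : _ * 2 - _ = 2 * F_ij - F_ik - F_jk); last by ring.
Qed.

Theorem corollary2 (R : rcfType) (psi : 'cV[R[i]]_8) (i j k : 'I_3) :
  normalized psi -> i != j -> i != k -> j != k ->
  (1 < Sval (reduced psi i j) <->
   (concurrence (reduced psi i k) ^+ 2 + concurrence (reduced psi j k) ^+ 2) / 2
     < concurrence (reduced psi i j) ^+ 2).
Proof.
move=> normed ij ik jk; pose G := amp_tensor psi i j k.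
have [ji ki kj] : [/\ j != i, k != i & k != j] by split; rewrite eq_sym.
have rho_ik := reduced_gram psi ik ij kj; rewrite tensor_mx_amp_tensorC // in rho_ik.
have rho_jk := reduced_gram psi jk ji ki; rewrite tensor_mx_amp_tensor_rot // in rho_jk.
apply: (@sqr_concurrence_gap _ `|\det (spin_form (tensor_mx G))|
  (frobenius2 (spin_form (tensor_mx G)))
  (frobenius2 (spin_form (tensor_mx (fun x y z => G x z y))))
  (frobenius2 (spin_form (tensor_mx (fun x y z => G z x y))))).
- by rewrite (reduced_gram psi ij ik jk) Sval_gram tensor_norm2_amp_tensor // expr1n.
- by rewrite (reduced_gram psi ij ik jk) concurrence_gram.
- by rewrite rho_ik concurrence_gram (det_spin_form_swap G).
- by rewrite rho_jk concurrence_gram (det_spin_form_rot G).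
Qed.
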